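(* Let $M\in\mathrm{M}_n(\mathbb{K})$. If there exists a nonzero $M$-code $\mathcal{C}\subsetneq\mathbb{L}^n$ with parameters $[n,k]$ that is MRD, i.e. $M_1(\mathcal{C})=n-k+1$, then the minimal polynomial of $M$ is $\mu_M=\pi^\ell$ for some integer $\ell\ge1$ and some monic polynomial $\pi\in\mathbb{K}[x]$ irreducible over $\mathbb{K}$.
   Context: Let $\mathbb{L}/\mathbb{K}$ be a field extension of finite degree $m$, and $n\ge 1$ an integer with $m\ge n$ (standing assumption). Vectors are row vectors. For $c=(c_1,\dots,c_n)\in\mathbb{L}^n$, $\mathrm{Rsupp}(c)\subseteq\mathbb{K}^n$ is the $\mathbb{K}$-row space of the $m\times n$ matrix over $\mathbb{K}$ whose $j$-th column is the coordinate vector of $c_j$ in a fixed $\mathbb{K}$-basis of $\mathbb{L}$, and $\mathrm{wt}_R(c)=\dim_{\mathbb{K}}\mathrm{Rsupp}(c)$; for an $\mathbb{L}$-subspace $\mathcal{D}$, $\mathrm{wt}_R(\mathcal{D})$ is the $\mathbb{K}$-dimension of the span of all $\mathrm{Rsupp}(d)$, $d\in\mathcal{D}$. For a linear $[n,k]$ code $\mathcal{C}$ and $1\le r\le k$, $M_r(\mathcal{C})=\min\{\mathrm{wt}_R(\mathcal{D}):\mathcal{D}\subseteq\mathcal{C},\dim_{\mathbb{L}}\mathcal{D}=r\}$. For $M\in\mathrm{M}_n(\mathbb{K})$, a linear code $\mathcal{C}\subseteq\mathbb{L}^n$ is an $M$-code if $cM^t\in\mathcal{C}$ for all $c\in\mathcal{C}$.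 *)

From HB Require Import structures.
From mathcomp Require Import all_boot all_order all_algebra all_field.
Set Implicit Arguments. Unset Strict Implicit. Unset Printing Implicit Defensive.
Import GRing.Theory.
Local Open Scope ring_scope.

(* K : fieldType, L : fieldExtType K (finite extension,
   m = \dim {:L}).  Vectors of L^n are row vectors 'rV[L]_n. *)

Section RankMetric.
Variables (K : fieldType) (L : fieldExtType K) (n : nat).

Definition coord_mx (c : 'rV[L]_n) : 'M[K]_(\dim {:L}, n) :=
  \matrix_(i < \dim {:L}, j < n) coord (vbasis {:L}) i (c 0 j).

(* Rsupp(c): its K-row space (represented, as in mxalgebra, by the matrix
   whose rows span it). *)
Definition Rsupp (c : 'rV[L]_n) : 'M[K]_(\dim {:L}, n) := coord_mx c.

Definition wtR (c : 'rV[L]_n) : nat := \rank (Rsupp c).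

Definition wtR_sub (D : {vspace 'rV[L]_n}) (w : nat) : Prop :=
  exists V : 'M[K]_n,
    [/\ (forall d, d \in D -> (Rsupp d <= V)%MS),
        (forall V' : 'M[K]_n, (forall d, d \in D -> (Rsupp d <= V')%MS) ->
              (V <= V')%MS)
      & \rank V = w].

Definition Mr (C : {vspace 'rV[L]_n}) (r : nat) (v : nat) : Prop :=
  (exists D : {vspace 'rV[L]_n}, [/\ (D <= C)%VS, \dim D = r & wtR_sub D v]) /\
  (forall (D : {vspace 'rV[L]_n}) (w : nat),
      (D <= C)%VS -> \dim D = r -> wtR_sub D w -> (v <= w)%N).

Definition is_M_code (M : 'M[K]_n) (C : {vspace 'rV[L]_n}) : Prop :=
  forall c, c \in C -> c *m (map_mx (in_alg L) M)^T \in C.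

Definition is_MRD (C : {vspace 'rV[L]_n}) : Prop :=
  Mr C 1 (n - \dim C + 1)%N.

End RankMetric.

From HB Require Import structures.
From mathcomp Require Import all_boot all_order all_algebra all_field.
From mathcomp Require Import zify.
From Stdlib Require Import Classical.
Set Implicit Arguments. Unset Strict Implicit. Unset Printing Implicit Defensive.
Import GRing.Theory.
Local Open Scope ring_scope.

(* If the minimal polynomial of M factored as f g with f, g coprime and
   nonconstant, a Bezout identity would give nonzero idempotents E1, E2,
   polynomials in M, with E1 + E2 = 1 and E1 E2 = 0; the M-code C is stable
   under both.  By a Singleton-type bound, multiplying an MRD code of dimension
   k by a K-matrix P of rank r leaves a code of dimension at most r + k - n.
   Since C is the sum of its two images, k <= r1 + r2 + 2k - 2n <= 2k - n,
   contradicting k < n.  A monic polynomial without such a factorization is a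
   power of a monic irreducible one. *)

Lemma irredp_eqp (K : fieldType) (p q : {poly K}) :
  p %= q -> irreducible_poly p -> irreducible_poly q.
Proof.
move=> pq [p_gt1 irr_p]; split=> [|d d1 dq]; first by rewrite -(eqp_size pq).
by rewrite -(eqp_rtrans pq) irr_p // (eqp_dvdr _ pq).
Qed.

Lemma exists_monic_irredp_dvdp (K : fieldType) (p : {poly K}) : (1 < size p)%N ->
  exists pi : {poly K}, [/\ pi \is monic, irreducible_poly pi & pi %| p].
Proof.
move=> p_gt1.
suff [pi irr_pi pi_p] : exists2 pi : {poly K}, irreducible_poly pi & pi %| p.
  have lc_pi : lead_coef pi != 0 by rewrite lead_coef_eq0 irredp_neq0.
  have pi_eqp : (lead_coef pi)^-1 *: pi %= pi by rewrite eqp_scale ?invr_eq0.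
  exists ((lead_coef pi)^-1 *: pi); split.
  - by rewrite monicE lead_coefZ mulVf.
  - by apply: irredp_eqp irr_pi; rewrite eqp_sym.
  - by rewrite (eqp_dvdl _ pi_eqp).
move: {2}(size p).+1 (ltnSn (size p)) => s.
elim: s p p_gt1 => // s IHs p p_gt1 size_p.
have p0 : p != 0 by rewrite -size_poly_gt0 (ltn_trans _ p_gt1).
have [[q [q1 q_p q_p']] | no_factor] :=
  classic (exists q : {poly K}, [/\ size q != 1, q %| p & ~~ (q %= p)]).
  have q0 : q != 0 by apply: contraNneq p0 => q0; rewrite -dvd0p -q0.
  have q_lt : (size q < size p)%N.
    by rewrite ltn_neqAle dvdp_size_eqp // q_p' dvdp_leq.
  have q_gt1 : (1 < size q)%N by rewrite ltn_neqAle eq_sym q1 size_poly_gt0.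
  have [pi irr_pi pi_q] := IHs q q_gt1 (leq_trans q_lt size_p).
  by exists pi; rewrite ?(dvdp_trans pi_q).
exists p => //; split=> // q q1 q_p.
by apply/negPn/negP => q_p'; apply: no_factor; exists q.
Qed.

Lemma pow_dvdp_decomp (K : fieldType) (pi p : {poly K}) :
  (1 < size pi)%N -> p != 0 -> exists k r, p = pi ^+ k * r /\ ~~ (pi %| r).
Proof.
move=> pi_gt1; move: {2}(size p).+1 (ltnSn (size p)) => s.
elim: s p => // s IHs p size_p p0.
have [pi_p | pi_p'] := boolP (pi %| p); last by exists 0%N, p; rewrite mul1r.
have pi0 : pi != 0 by rewrite -size_poly_gt0 (ltn_trans _ pi_gt1).
have p_def := divpK pi_p; set q := p %/ pi in p_def.
have q0 : q != 0 by apply: contraNneq p0 => q0; rewrite -p_def q0 mul0r.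
have q_lt : (size q < size p)%N.
  by rewrite size_divp // ltn_subrL size_poly_gt0 p0 -subn1 subn_gt0 andbT.
have [k [r [q_def pi_r]]] := IHs q (leq_trans q_lt size_p) q0.
by exists k.+1, r; rewrite -p_def q_def exprSr mulrAC.
Qed.

Lemma irredp_pow_of_coprime_indecomposable (K : fieldType) (mu : {poly K}) :
  mu \is monic -> (1 < size mu)%N ->
  (forall f g, mu = f * g -> coprimep f g -> (1 < size f)%N -> (1 < size g)%N ->
     False) ->
  exists (pi : {poly K}) (l : nat),
    [/\ (0 < l)%N, pi \is monic, irreducible_poly pi & mu = pi ^+ l].
Proof.
move=> mu_monic mu_gt1 no_split.
have [pi [pi_monic pi_irr pi_mu]] := exists_monic_irredp_dvdp mu_gt1.
have [l [r [mu_def pi_r]]] := pow_dvdp_decomp pi_irr.1 (monic_neq0 mu_monic).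
have l_gt0 : (0 < l)%N.
  rewrite lt0n; apply: contraNneq pi_r => l0.
  by rewrite -(mul1r r) -(expr0 pi) -l0 -mu_def.
have r_monic : r \is monic by rewrite -(monicMl _ (monic_exp l pi_monic)) -mu_def.
have r_le1 : (size r <= 1)%N.
  rewrite leqNgt; apply/negP => /(no_split _ _ mu_def); apply.
    by rewrite coprimep_expl // irreducible_poly_coprime.
  apply: leq_trans pi_irr.1 (dvdp_leq (monic_neq0 (monic_exp l pi_monic)) _).
  by rewrite dvdp_exp.
have r1 : r = 1.
  apply/eqP; rewrite -eqp_monic ?monic1 // -size_poly_eq1 eqn_leq r_le1.
  by rewrite size_poly_gt0 monic_neq0.
by exists pi, l; rewrite mu_def r1 mulr1.
Qed.

Lemma mxminpoly_coprime_idempotents (K : fieldType) n (M : 'M[K]_n.+1) f g :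
  mxminpoly M = f * g -> coprimep f g -> (1 < size f)%N -> (1 < size g)%N ->
  exists p q : {poly K},
    [/\ horner_mx M p + horner_mx M q = 1, horner_mx M p * horner_mx M q = 0,
        horner_mx M p != 0 & horner_mx M q != 0].
Proof.
move=> mu_fg /Bezout_eq1_coprimepP [[u v] /= Bez] f_gt1 g_gt1.
have horner_neq0 a b x y : x * a + y * b = 1 -> a %| mxminpoly M ->
    (1 < size a)%N -> horner_mx M (y * b) != 0.
  move=> Bez_ab a_mu; apply: contraTneq => /mxminpoly_min mu_yb.
  have : a %| 1 by rewrite -Bez_ab dvdp_addr ?dvdp_mulIr // (dvdp_trans a_mu mu_yb).
  by rewrite dvdp1 => /eqP ->.
exists (v * g), (u * f); split.
- by rewrite -rmorphD addrC Bez rmorph1.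
- apply/eqP; rewrite -rmorphM -dvd_mxminpoly mu_fg mulrC.
  by rewrite dvdp_mul ?dvdp_mull.
- by apply: horner_neq0 Bez _ f_gt1; rewrite mu_fg dvdp_mulIl.
- by apply: (horner_neq0 _ _ v) g_gt1; rewrite ?mu_fg ?dvdp_mulIr // addrC.
Qed.

Section RankMetricCodes.
Variables (K : fieldType) (L : fieldExtType K).

Definition ext_mulmxr N p (P : 'M[K]_(N, p)) : 'Hom('rV[L]_N, 'rV[L]_p) :=
  linfun (mulmxr (map_mx (in_alg L) P)).

Lemma ext_mulmxrE N p (P : 'M[K]_(N, p)) c :
  ext_mulmxr P c = c *m map_mx (in_alg L) P.
Proof. by rewrite lfunE. Qed.

Definition code_stable N (C : {vspace 'rV[L]_N}) (P : 'M[K]_N) :=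
  forall c, c \in C -> ext_mulmxr P c \in C.

Lemma dim_rV N : \dim {:'rV[L]_N} = N.
Proof. by rewrite dimvf /dim /= mul1n. Qed.

Lemma coord_mxM N p (c : 'rV[L]_N) (P : 'M[K]_(N, p)) :
  coord_mx (c *m map_mx (in_alg L) P) = coord_mx c *m P.
Proof.
apply/matrixP => i j; rewrite !mxE.
under eq_bigr => k _ do rewrite !mxE mulr_algr.
rewrite linear_sum; apply: eq_bigr => k _.
by rewrite linearZ /= mxE mulrC.
Qed.

Lemma coord_mx0 N : coord_mx (0 : 'rV[L]_N) = 0.
Proof. by apply/matrixP => i j; rewrite !mxE linear0. Qed.

Lemma coord_mxZ N (a : L) (c : 'rV[L]_N) : (coord_mx (a *: c) <= coord_mx c)%MS.
Proof.
apply/submxP; exists (\matrix_(i, l) coord (vbasis {:L}) i (a * (vbasis {:L})`_l)).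
apply/matrixP => i j; rewrite !mxE.
rewrite {1}(coord_vbasis (memvf (c 0 j))) mulr_sumr linear_sum.
by apply: eq_bigr => l _; rewrite !mxE -scalerAr linearZ /= mulrC.
Qed.

Lemma wtR_sub_line N (c : 'rV[L]_N) : wtR_sub <[c]>%VS (wtR c).
Proof.
exists <<Rsupp c>>%MS; split; last by rewrite genmxE.
- by move=> d /vlineP [a ->]; rewrite genmxE coord_mxZ.
- by move=> V' HV; rewrite genmxE HV ?memv_line.
Qed.

Lemma MRD_wtR_ge N (C : {vspace 'rV[L]_N}) c :
  is_MRD C -> c \in C -> c != 0 -> (N - \dim C + 1 <= wtR c)%N.
Proof.
move=> [_ minC] cC c0; apply: minC (wtR_sub_line c).
  by rewrite -memvE.
by rewrite dim_vline c0.
Qed.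

(* Project onto [rank W + 1 - d] coordinates of a basis of [W]: a codeword
   killed by this projection has a support of dimension at most [d - 1]. *)
Lemma singleton_bound N r (D : {vspace 'rV[L]_N}) (W : 'M[K]_(r, N)) d :
  (0 < d)%N -> (forall c, c \in D -> (Rsupp c <= W)%MS) ->
  (forall c, c \in D -> c != 0 -> (d <= wtR c)%N) ->
  (\dim D <= \rank W + 1 - d)%N.
Proof.
move=> d_gt0 suppW wtD; set t := (\rank W + 1 - d)%N.
pose B := row_base W.
pose G : 'M[K]_(N, t) := pinvmx B *m pid_mx t.
have BG : B *m G = pid_mx t by rewrite mulmxA mulmxVp ?row_base_free // mul1mx.
have kerG c : c \in D -> ext_mulmxr G c = 0 -> c = 0.
  rewrite ext_mulmxrE => cD cG; apply/eqP; apply: contraT => c0.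
  have suppB : (Rsupp c <= B)%MS by rewrite eq_row_base suppW.
  have suppG : Rsupp c *m G = 0 by rewrite /Rsupp -coord_mxM cG coord_mx0.
  have := mxrank_Frobenius (Rsupp c *m pinvmx B) B G.
  have tW : (t <= \rank W)%N by rewrite /t; lia.
  rewrite mulmxKpV // suppG mxrank0 BG rank_pid_mx // (eqnP (row_base_free W)).
  by have := wtD c cD c0; rewrite /wtR /t; lia.
have capD : (D :&: lker (ext_mulmxr G))%VS = 0%VS.
  apply/eqP; rewrite -subv0; apply/subvP => x; rewrite memv_cap memv0 memv_ker.
  by case/andP => xD /eqP fx0; rewrite (kerG x xD fx0).
rewrite -(limg_dim_eq capD); apply: leq_trans (dimvS (subvf _)) _.
by rewrite dim_rV.
Qed.

Lemma MRD_stable_image_dim N (C : {vspace 'rV[L]_N}) (P : 'M[K]_N) :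
  is_MRD C -> code_stable C P ->
  (\dim (ext_mulmxr P @: C) <= \rank P + \dim C - N)%N.
Proof.
move=> MRD_C stableP.
have bound := @singleton_bound N N (ext_mulmxr P @: C) P (N - \dim C + 1).
apply: leq_trans (bound _ _ _) _; [by rewrite addn1 | | | lia].
- by move=> _ /memv_imgP [c cC ->]; rewrite ext_mulmxrE /Rsupp coord_mxM submxMl.
- by move=> _ /memv_imgP [c cC ->]; apply: MRD_wtR_ge; rewrite ?stableP.
Qed.

Lemma MRD_no_stable_split N (C : {vspace 'rV[L]_N}) (P1 P2 : 'M[K]_N) :
  C != 0%VS -> C != fullv -> is_MRD C -> code_stable C P1 -> code_stable C P2 ->
  P1 + P2 = 1%:M -> P1 *m P2 = 0 -> P1 != 0 -> P2 != 0 -> False.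
Proof.
move=> C0 Cfull MRD_C stable1 stable2 P12 P1P2 P1_0 P2_0.
have dimC_gt0 : (0 < \dim C)%N by rewrite lt0n dimv_eq0.
have dimC_lt : (\dim C < N)%N.
  have [le_dimC eq_dimC] := dimv_leqif_eq (subvf C).
  by move: le_dimC eq_dimC; rewrite dim_rV ltn_neqAle => -> ->; rewrite Cfull.
have CsubD : (C <= ext_mulmxr P1 @: C + ext_mulmxr P2 @: C)%VS.
  apply/subvP => c cC; have -> : c = ext_mulmxr P1 c + ext_mulmxr P2 c.
    by rewrite !ext_mulmxrE -mulmxDr -map_mxD P12 map_scalar_mx /= scale1r mulmx1.
  by rewrite memv_add ?memv_img.
have dimC_le := leq_trans (dimvS CsubD) (dimv_add_leqif _ _).1.
have dim1 := MRD_stable_image_dim MRD_C stable1.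
have dim2 := MRD_stable_image_dim MRD_C stable2.
have rank12 := mulmx0_rank_max P1P2.
rewrite -!mxrank_eq0 -!lt0n in P1_0 P2_0.
set k := \dim C in dimC_gt0 dimC_lt dimC_le dim1 dim2.
set d1 := \dim (_ P1 @: C) in dimC_le dim1.
set d2 := \dim (_ P2 @: C) in dimC_le dim2.
lia.
Qed.

Lemma Mcode_stable_horner n (M : 'M[K]_n.+1) (C : {vspace 'rV[L]_n.+1}) p :
  is_M_code M C -> code_stable C (horner_mx M p)^T.
Proof.
move=> MC; elim/poly_ind: p => [|p a IHp] c cC; rewrite ext_mulmxrE.
  by rewrite rmorph0 trmx0 map_mx0 mulmx0 mem0v.
rewrite rmorphD rmorphM /= horner_mx_X horner_mx_C -mulmxE linearD /= trmx_mul.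
rewrite map_mxD map_mxM mulmxDr mulmxA tr_scalar_mx map_scalar_mx mul_mx_scalar.
by rewrite memvD ?memvZ // -ext_mulmxrE IHp // -map_trmx MC.
Qed.

Lemma Mcode_MRD_minpoly_no_coprime_split n (M : 'M[K]_n.+1)
    (C : {vspace 'rV[L]_n.+1}) f g :
  C != 0%VS -> C != fullv -> is_M_code M C -> is_MRD C ->
  mxminpoly M = f * g -> coprimep f g -> (1 < size f)%N -> (1 < size g)%N -> False.
Proof.
move=> C0 Cfull MC MRD_C mu_fg cop_fg f_gt1 g_gt1.
have [p [q [pq1 pq0 p0 q0]]] :=
  mxminpoly_coprime_idempotents mu_fg cop_fg f_gt1 g_gt1.
have stable_p := Mcode_stable_horner p MC; have stable_q := Mcode_stable_horner q MC.
apply: (MRD_no_stable_split C0 Cfull MRD_C stable_q stable_p).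
- by rewrite -linearD /= addrC pq1 trmx1.
- by rewrite -trmx_mul mulmxE pq0 trmx0.
- by rewrite trmx_eq0.
- by rewrite trmx_eq0.
Qed.

End RankMetricCodes.

Theorem theorem3 (K : fieldType) (L : fieldExtType K) (n : nat)
    (Hmn : (n.+1 <= \dim {:L})%N) (M : 'M[K]_n.+1) :
  (exists C : {vspace 'rV[L]_n.+1},
      [/\ C != 0%VS, C != fullv, is_M_code M C & is_MRD C]) ->
  exists (pi : {poly K}) (l : nat),
    [/\ (0 < l)%N, pi \is monic, irreducible_poly pi & mxminpoly M = pi ^+ l].
Proof.
move=> [C [C0 Cfull MC MRD_C]].
apply: irredp_pow_of_coprime_indecomposable; first exact: mxminpoly_monic.
  by rewrite size_mxminpoly ltnS mxminpoly_nonconstant.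
move=> f g; exact: Mcode_MRD_minpoly_no_coprime_split C0 Cfull MC MRD_C.
Qed.
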